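(* Let $\Psi=(\Gamma_1,\dots,\Gamma_r)$ and $\Psi'=(\Gamma'_1,\dots,\Gamma'_r)$ be tripartite states of format $r\times I_1\times I_2$ with $\Gamma_1,\dots,\Gamma_r$ linearly independent and $\Gamma'_1,\dots,\Gamma'_r$ linearly independent. Let $U,U'$ be the invertible matrices built from these states and chosen complementary states. Consider the following condition: ( * ) there exist an invertible $P\in\mathbb C^{r\times r}$, an invertible $\overline P\in\mathbb C^{(I_1I_2-r)\times(I_1I_2-r)}$ and some $Y$ such that, with $\widetilde P=\begin{pmatrix}P&Y\\0&\overline P\end{pmatrix}$, $$\operatorname{rank}\mathcal W\big(U\widetilde P\,U'^{-1}\vec a\big)=\operatorname{rank}\mathcal W(\vec a)\quad\text{for every }\vec a\in\mathbb C^{I_1I_2}.$$ (a) If $\Psi'$ and $\Psi$ are SLOCC equivalent, then ( * ) holds. (b) If $I_1\neq I_2$ and ( * ) holds, then $\Psi'$ and $\Psi$ are SLOCC equivalent. (c) If $I_1=I_2$ and ( * ) holds, then $\Psi'$ is SLOCC equivalent either to $\Psi$ or to $\Psi^{\mathrm T}:=(\Gamma_1^{\mathrm T},\dots,\Gamma_r^{\mathrm T})$. The state $\Psi^{\mathrm T}$ is $\Psi$ with the second and third parties exchanged.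
   Context: **Tripartite states as tuples.** A tuple $(\Gamma_1,\dots,\Gamma_r)$ with $\Gamma_k\in\mathbb C^{I_1\times I_2}$ denotes the state $$\sum_k\sum_{i_1,i_2}(\Gamma_k)_{i_1i_2}|k\rangle|i_1\rangle|i_2\rangle.$$ **SLOCC equivalence.** Two such states are SLOCC equivalent if they are related by $P_0\otimes A_1\otimes A_2$ with $P_0,A_1,A_2$ invertible, i.e. $\Gamma'_k=\sum_l(P_0)_{kl}A_1\Gamma_lA_2^{\mathrm T}$. **Vectorization and folding.** $\mathcal V(\Gamma)$ is the column-stacking vectorization of $\Gamma\in\mathbb C^{I_1\times I_2}$, namely $(\Gamma_{11},\dots,\Gamma_{I_11},\Gamma_{12},\dots,\Gamma_{I_1I_2})^{\mathrm T}$. For $\vec a=(a_1,\dots,a_{I_1I_2})^{\mathrm T}$, the folding $\mathcal W(\vec a)\in\mathbb C^{I_1\times I_2}$ is the inverse operation, with $(p,q)$ entry $a_{(q-1)I_1+p}$. **Complementary state.** A complementary state of $(\Gamma_1,\dots,\Gamma_r)$ is any tuple $(\Gamma_{r+1},\dots,\Gamma_{I_1I_2})$ such that $\Gamma_1,\dots,\Gamma_{I_1I_2}$ form a basis of $\mathbb C^{I_1\times I_2}$. **The matrices $U,U'$.** Given complementary states, set $U=(\mathcal V(\Gamma_1),\dots,\mathcal V(\Gamma_{I_1I_2}))$ and $U'=(\mathcal V(\Gamma'_1),\dots,\mathcal V(\Gamma'_{I_1I_2}))$. *)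

From HB Require Import structures.
From mathcomp Require Import all_boot all_order all_algebra.
Set Implicit Arguments. Unset Strict Implicit. Unset Printing Implicit Defensive.
Import Order.TTheory GRing.Theory Num.Theory.
Local Open Scope ring_scope.

Section Defs.
Variable F : fieldType.

(* A tripartite state of format r x I1 x I2 is a tuple G : 'I_r -> 'M_(I1, I2). *)

(* Column-stacking vectorization V(A): entry number q*I1 + p (0-based) is A p q.
   mxvec is row-major, so column stacking of A is mxvec of A^T. *)
Definition vecc (I1 I2 : nat) (A : 'M[F]_(I1, I2)) : 'cV[F]_(I2 * I1) :=
  (mxvec A^T)^T.

(* Folding W(a): inverse of vecc; (p,q) entry is a_(q*I1 + p). *)
Definition foldc (I1 I2 : nat) (a : 'cV[F]_(I2 * I1)) : 'M[F]_(I1, I2) :=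
  (vec_mx a^T)^T.

Definition lin_indep (r I1 I2 : nat) (G : 'I_r -> 'M[F]_(I1, I2)) : bool :=
  row_free (\matrix_(k < r) mxvec (G k)).

Definition Umx (r s I1 I2 : nat) (e : (r + s = I2 * I1)%N)
    (G : 'I_r -> 'M[F]_(I1, I2)) (Gc : 'I_s -> 'M[F]_(I1, I2)) : 'M[F]_(I2 * I1) :=
  castmx (erefl (I2 * I1)%N, e)
    (row_mx (\matrix_(i, k) vecc (G k) i 0) (\matrix_(i, k) vecc (Gc k) i 0)).

(* Gc is a complementary state of G: all together form a basis, i.e. U invertible. *)
Definition complementary (r s I1 I2 : nat) (e : (r + s = I2 * I1)%N)
    (G : 'I_r -> 'M[F]_(I1, I2)) (Gc : 'I_s -> 'M[F]_(I1, I2)) : bool :=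
  Umx e G Gc \in unitmx.

Definition Ptilde (r s n : nat) (e : (r + s = n)%N)
    (P : 'M[F]_r) (Y : 'M[F]_(r, s)) (Pbar : 'M[F]_s) : 'M[F]_n :=
  castmx (e, e) (block_mx P Y 0 Pbar).

Definition slocc (r I1 I2 : nat) (G G' : 'I_r -> 'M[F]_(I1, I2)) : Prop :=
  exists (P0 : 'M[F]_r) (A1 : 'M[F]_I1) (A2 : 'M[F]_I2),
    [/\ P0 \in unitmx, A1 \in unitmx, A2 \in unitmx &
      forall k : 'I_r, G' k = \sum_(l < r) P0 k l *: (A1 *m G l *m A2^T)].

Definition cond_star (r s I1 I2 : nat) (e : (r + s = I2 * I1)%N)
    (G : 'I_r -> 'M[F]_(I1, I2)) (Gc : 'I_s -> 'M[F]_(I1, I2))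
    (G' : 'I_r -> 'M[F]_(I1, I2)) (Gc' : 'I_s -> 'M[F]_(I1, I2)) : Prop :=
  exists (P : 'M[F]_r) (Pbar : 'M[F]_s) (Y : 'M[F]_(r, s)),
    [/\ P \in unitmx, Pbar \in unitmx &
      forall a : 'cV[F]_(I2 * I1),
        \rank (foldc (Umx e G Gc *m Ptilde e P Y Pbar *m invmx (Umx e G' Gc') *m a))
        = \rank (foldc a)].

Definition stateT (r I1 I2 : nat) (G : 'I_r -> 'M[F]_(I1, I2)) : 'I_r -> 'M[F]_(I2, I1) :=
  fun k => (G k)^T.

End Defs.

From HB Require Import structures.
From mathcomp Require Import all_boot all_order all_algebra.
From Stdlib Require Import Classical.
Set Implicit Arguments. Unset Strict Implicit. Unset Printing Implicit Defensive.
Import Order.TTheory GRing.Theory Num.Theory.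
Local Open Scope ring_scope.

(* A linear map f on m x n matrices that preserves rank sends rank-one matrices
   to rank-one matrices.  For fixed x the matrices f (x^T y) form a linear space
   of rank-one matrices, so they share a left factor, f (x^T y) = a^T (y G), or a
   right factor, f (x^T y) = (y W)^T b.  A right factor forces n <= m, and for
   n >= 2 the two behaviours cannot occur for different x.  Hence f X = A X B,
   or, for square matrices only, f X = A X^T B, with A and B invertible.
   Condition (star) says that U Ptilde U'^-1, read through vectorization and
   folding, is such a rank preserver sending Gamma'_k to sum_l P_lk Gamma_l,
   which gives (b) and (c).  Conversely, if K is the matrix of X |-> A1 X A2^T,
   then U^-1 K U' is block upper triangular, which gives (a). *)

(** * Rank-one matrices *)

Section RankOne.
Variable F : fieldType.

Lemma delta_rV_neq0 n (i : 'I_n) : (delta_mx 0 i : 'rV[F]_n) != 0.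
Proof. by apply/rV0Pn; exists i; rewrite mxE !eqxx oner_eq0. Qed.

Definition outer (m n : nat) (x : 'rV[F]_m) (y : 'rV[F]_n) : 'M[F]_(m, n) :=
  x^T *m y.

Lemma outerE m n (x : 'rV[F]_m) (y : 'rV[F]_n) i j :
  outer x y i j = x 0 i * y 0 j.
Proof. by rewrite /outer !mxE big_ord1 !mxE. Qed.

Lemma outer0l m n (y : 'rV[F]_n) : outer (0 : 'rV[F]_m) y = 0.
Proof. by rewrite /outer trmx0 mul0mx. Qed.

Lemma outer0r m n (x : 'rV[F]_m) : outer x (0 : 'rV[F]_n) = 0.
Proof. by rewrite /outer mulmx0. Qed.

Lemma outerDl m n (x1 x2 : 'rV[F]_m) (y : 'rV[F]_n) :
  outer (x1 + x2) y = outer x1 y + outer x2 y.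
Proof. by rewrite /outer linearD mulmxDl. Qed.

Lemma outerZlr m n k (x : 'rV[F]_m) (y : 'rV[F]_n) :
  outer (k *: x) y = outer x (k *: y).
Proof. by rewrite /outer linearZ /= -scalemxAl scalemxAr. Qed.

Lemma tr_outer m n (x : 'rV[F]_m) (y : 'rV[F]_n) : (outer x y)^T = outer y x.
Proof. by rewrite /outer trmx_mul trmxK. Qed.

Lemma outer_eq0r m n (x : 'rV[F]_m) (y : 'rV[F]_n) :
  outer x y = 0 -> x != 0 -> y = 0.
Proof.
move=> xy0 /rV0Pn [i xi]; apply/rowP => j; rewrite mxE.
have /eqP := congr1 (fun M : 'M[F]_(m, n) => M i j) xy0.
by rewrite outerE mxE mulf_eq0 (negPf xi) => /eqP.
Qed.

Lemma outer_eq0l m n (x : 'rV[F]_m) (y : 'rV[F]_n) :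
  outer x y = 0 -> y != 0 -> x = 0.
Proof. by move=> xy0; apply: outer_eq0r; rewrite -tr_outer xy0 trmx0. Qed.

Lemma mxrank_outer m n (x : 'rV[F]_m) (y : 'rV[F]_n) : (\rank (outer x y) <= 1)%N.
Proof. exact: leq_trans (mxrankM_maxr _ _) (rank_leq_row _). Qed.

Lemma outer_of_rank_le1 m n (X : 'M[F]_(m, n)) :
  (\rank X <= 1)%N -> exists a b, X = outer a b.
Proof.
move=> rX; have [->|X0] := eqVneq X 0; first by exists 0, 0; rewrite outer0l.
have [i Xi0] : exists i, row i X != 0.
  apply/existsP; apply: contraR X0; rewrite negb_exists => /forallP Xrow0.
  by apply/eqP/row_matrixP => i; rewrite row0; apply/eqP; rewrite -[_ == _]negbK.
have : (X <= row i X)%MS.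
  have [_ <-] := mxrank_leqif_sup (row_sub i X).
  by rewrite eqn_leq mxrankS ?row_sub // rank_rV Xi0.
by case/submxP=> D ->; exists D^T, (row i X); rewrite /outer trmxK.
Qed.

Lemma mxrank_col_mx_indep m (a c : 'rV[F]_m) :
  a != 0 -> ~~ (c <= a)%MS -> \rank (col_mx a c) = 2.
Proof.
move=> a0 ca; apply/eqP; rewrite eqn_leq (leq_trans (rank_leq_row _)) //=.
rewrite -addsmxE; have [le eq_rank] := mxrank_leqif_sup (addsmxSl a c).
move: le eq_rank; rewrite rank_rV a0 leq_eqVlt => /orP [/eqP ->|//].
by rewrite eqxx addsmx_sub submx_refl (negPf ca).
Qed.

(* [a^T b + c^T d] factors as [(col_mx a c)^T *m col_mx b d], a product of two
   rank-two matrices unless one of the inclusions holds. *)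
Lemma outerD_rank_le1 m n (a c : 'rV[F]_m) (b d : 'rV[F]_n) :
  (\rank (outer a b + outer c d)%R <= 1)%N -> a != 0 -> b != 0 ->
  (c <= a)%MS || (d <= b)%MS.
Proof.
have -> : outer a b + outer c d = (col_mx a c)^T *m col_mx b d.
  by rewrite tr_col_mx mul_row_col.
move=> rk a0 b0; apply/negPn/negP => /norP [ca db].
have bd_free : row_free (col_mx b d) by rewrite /row_free mxrank_col_mx_indep.
by move: rk; rewrite mxrankMfree // mxrank_tr mxrank_col_mx_indep.
Qed.

Lemma outer_delta m n (i : 'I_m) (j : 'I_n) :
  outer (delta_mx 0 i) (delta_mx 0 j) = delta_mx i j :> 'M[F]_(m, n).
Proof. by rewrite /outer trmx_delta mul_delta_mx. Qed.

Lemma outer_eq_sub m n (x1 x2 : 'rV[F]_m) (z y : 'rV[F]_n) :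
  outer x1 z = outer x2 y -> y != 0 -> (x2 <= x1)%MS.
Proof.
move=> eq_outer /rV0Pn [j yj0]; apply/sub_rVP; exists (z 0 j / y 0 j).
apply/rowP => i; have := congr1 (fun M : 'M[F]_(m, n) => M i j) eq_outer.
rewrite !outerE mxE => eq_ij.
by rewrite -[x2 0 i](mulfK yj0) -eq_ij [RHS]mulrC mulrA.
Qed.

Lemma sub_rV_sym m (u v : 'rV[F]_m) : u != 0 -> (u <= v)%MS -> (v <= u)%MS.
Proof.
move=> u0 /sub_rVP [k def_u]; apply/sub_rVP; exists k^-1.
have k0 : k != 0 by apply: contraNneq u0 => k0; rewrite def_u k0 scale0r.
by rewrite def_u scalerA mulVf // scale1r.
Qed.

Lemma outer_share_factor m n (a : 'rV[F]_m) (b : 'rV[F]_n) (X : 'M[F]_(m, n)) :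
  a != 0 -> b != 0 -> (\rank X <= 1)%N -> (\rank (outer a b + X)%R <= 1)%N ->
  (exists z, X = outer a z) \/ (exists w, X = outer w b).
Proof.
move=> a0 b0 /outer_of_rank_le1 [c [d ->]] /outerD_rank_le1 /(_ a0 b0).
case/orP=> /sub_rVP [k ->]; first by left; exists (k *: d); rewrite outerZlr.
by right; exists (k *: c); rewrite outerZlr.
Qed.

Lemma exists_rV_notin_line n (p : 'rV[F]_n) :
  (1 < n)%N -> exists y : 'rV[F]_n, ~~ (y <= p)%MS.
Proof.
move=> n_gt1; have [i not_sub] : exists i, ~~ (row i (1%:M : 'M[F]_n) <= p)%MS.
  apply/row_subPn; rewrite sub1mx; apply: contraTneq n_gt1 => <-.
  by rewrite -leqNgt rank_leq_row.
by exists (row i 1%:M).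
Qed.

Lemma row_free_two_lines_cover n k (W : 'M[F]_(n, k))
    (a : 'rV[F]_k) (p : 'rV[F]_n) :
  row_free W -> p != 0 -> (1 < n)%N ->
  ~ (forall y : 'rV[F]_n, (y *m W <= a)%MS || (y <= p)%MS).
Proof.
move=> W_free p0 n_gt1 cover; have [y y_np] := exists_rV_notin_line p n_gt1.
have yWa : (y *m W <= a)%MS by have := cover y; rewrite (negPf y_np) orbF.
have ypWa : ((y + p) *m W <= a)%MS.
  suff yp_np : ~~ ((y + p)%R <= p)%MS by have := cover (y + p); rewrite (negPf yp_np) orbF.
  apply: contra y_np => yp_p; rewrite -[y](addrK p) addmx_sub //.
  by rewrite (eqmx_opp p) submx_refl.
have pWa : (p *m W <= a)%MS.
  by rewrite -[p](addKr y) mulmxDl addmx_sub // mulNmx (eqmx_opp (y *m W)).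
have := mxrankS (_ : col_mx (p *m W) (y *m W) <= a)%MS.
rewrite col_mx_sub pWa yWa -mul_col_mx mxrankMfree // mxrank_col_mx_indep //.
by move=> /(_ isT); rewrite leqNgt (leq_ltn_trans (rank_leq_row a)).
Qed.

Lemma scalar_of_rowsub n (T : 'M[F]_n.+1) :
  (forall y : 'rV[F]_n.+1, (y *m T <= y)%MS) -> T = (T 0 0)%:M.
Proof.
move=> T_rowsub.
have T_offdiag i j : i != j -> T i j = 0.
  move=> ij; have /sub_rVP [k ek] := T_rowsub (delta_mx 0 i).
  have := congr1 (fun v : 'rV[F]_n.+1 => v 0 j) ek.
  by rewrite -rowE !mxE eqxx eq_sym (negPf ij) mulr0.
have T_diag i : T i i = T 0 0.
  have [->//|i0] := eqVneq i 0.
  have /sub_rVP [k ek] := T_rowsub (delta_mx 0 0 + delta_mx 0 i).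
  have := congr1 (fun v : 'rV[F]_n.+1 => v 0 i) ek.
  have := congr1 (fun v : 'rV[F]_n.+1 => v 0 0) ek.
  rewrite mulmxDl -!rowE !mxE !eqxx (negPf i0) eq_sym (negPf i0).
  rewrite (T_offdiag i 0) // (T_offdiag 0 i) 1?eq_sym //= addr0 add0r.
  by rewrite addr0 add0r => -> ->.
apply/matrixP => i j; rewrite !mxE; have [<-|ij] := eqVneq i j.
  by rewrite T_diag mulr1n.
by rewrite T_offdiag // mulr0n.
Qed.

Lemma rowsub_mul_scale n (G1 G2 : 'M[F]_n.+1) : G1 \in unitmx ->
  (forall y : 'rV[F]_n.+1, (y *m G2 <= y *m G1)%MS) -> exists c, G2 = c *: G1.
Proof.
move=> G1_unit G2_sub; pose T := G2 *m invmx G1.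
have T_rowsub (y : 'rV[F]_n.+1) : (y *m T <= y)%MS.
  by have := submxMr (invmx G1) (G2_sub y); rewrite mulmxK // mulmxA.
exists (T 0 0); rewrite -mul_scalar_mx -(scalar_of_rowsub T_rowsub).
by rewrite mulmxKV.
Qed.

End RankOne.

Arguments delta_rV_neq0 {F n} i.

Section LinearRankOne.
Variable F : fieldType.
Variables p q r : nat.
Variable h : {linear 'rV[F]_p -> 'M[F]_(q, r)}.
Hypothesis h_rank : forall y, (\rank (h y) <= 1)%N.

(* Each [h y] shares a factor with [h y0]; one sharing only the left factor and
   one sharing only the right factor would have a sum of rank two. *)
Lemma linear_rank_le1_factor a b y0 : a != 0 -> b != 0 -> h y0 = outer a b ->
  (forall y, exists z, h y = outer a z) \/ (forall y, exists w, h y = outer w b).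
Proof.
move=> a0 b0 hy0.
have share y : (exists z, h y = outer a z) \/ (exists w, h y = outer w b).
  by apply: outer_share_factor; rewrite -?hy0 -?linearD.
have [left_factor|] := classic (forall y, exists z, h y = outer a z); [by left|].
move=> /not_all_ex_not [y1 not_left]; right => y2.
have [[z2 hy2]|//] := share y2.
have [[z hy1]|[w1 hy1]] := share y1; first by case: not_left; exists z.
have [/sub_rVP [k z2b]|z2_nb] := boolP (z2 <= b)%MS.
  by exists (k *: a); rewrite hy2 z2b outerZlr.
have z20 : z2 != 0 by apply: contraNneq z2_nb => ->; rewrite sub0mx.
have := h_rank (y2 + y1); rewrite linearD hy1 hy2 => /outerD_rank_le1.
case/(_ a0 z20)/orP => [/sub_rVP [k w1a] | /(sub_rV_sym b0) z2b].
  by case: not_left; exists (k *: b); rewrite hy1 w1a outerZlr.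
by rewrite z2b in z2_nb.
Qed.

Lemma linear_outer_l a : a != 0 -> (forall y, exists z, h y = outer a z) ->
  exists G : 'M[F]_(p, r), forall y, h y = outer a (y *m G).
Proof.
move=> /rV0Pn [i ai] left_factor.
exists (\matrix_(k, j) ((a 0 i)^-1 * h (delta_mx 0 k) i j)) => y.
have [z hy] := left_factor y; rewrite hy; congr outer; apply/rowP => j.
transitivity ((a 0 i)^-1 * h y i j); first by rewrite hy outerE mulKf.
rewrite {1}(row_sum_delta y) linear_sum summxE mulr_sumr !mxE.
by apply: eq_bigr => k _; rewrite linearZ !mxE mulrCA.
Qed.

End LinearRankOne.

(** * Linear rank preservers *)

Section RankPreserver.
Variable F : fieldType.
Variables m n : nat.
Variable f : {linear 'M[F]_(m, n) -> 'M[F]_(m, n)}.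
Hypothesis f_rank : forall X, \rank (f X) = \rank X.

Definition row_type (x : 'rV[F]_m) := exists a (G : 'M[F]_n),
  [/\ a != 0, G \in unitmx & forall y, f (outer x y) = outer a (y *m G)].

Definition col_type (x : 'rV[F]_m) := exists b (W : 'M[F]_(n, m)),
  [/\ b != 0, row_free W & forall y, f (outer x y) = outer (y *m W) b].

Lemma rank_pres_eq0 X : f X = 0 -> X = 0.
Proof. by move=> fX0; apply/eqP; rewrite -mxrank_eq0 -f_rank fX0 mxrank0. Qed.

Lemma rank_pres_inj : injective f.
Proof.
by move=> X Y eq_f; apply/subr0_eq/rank_pres_eq0; rewrite linearB eq_f subrr.
Qed.

Lemma row_or_col_type (x : 'rV[F]_m) : x != 0 -> (0 < n)%N -> row_type x \/ col_type x.
Proof.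
move=> x0 n_gt0; pose y0 : 'rV[F]_n := delta_mx 0 (Ordinal n_gt0).
have y00 : y0 != 0 := delta_rV_neq0 _.
have fx_rank y : (\rank ((f \o mulmx x^T) y) <= 1)%N by rewrite /= f_rank mxrank_outer.
have fx_inj y : f (outer x y) = 0 -> y = 0 by move/rank_pres_eq0/outer_eq0r; apply.
have [a [b fy0]] : exists a b, f (outer x y0) = outer a b.
  exact: outer_of_rank_le1 (fx_rank y0).
have a0 : a != 0 by apply: contra y00 => /eqP a0; rewrite -(fx_inj y0) ?eqxx // fy0 a0 outer0l.
have b0 : b != 0 by apply: contra y00 => /eqP b0; rewrite -(fx_inj y0) ?eqxx // fy0 b0 outer0r.
case: (linear_rank_le1_factor fx_rank a0 b0 fy0) => [left_factor|right_factor].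
  left; have [G fxG] := linear_outer_l a0 left_factor; exists a, G; split => //.
  rewrite -row_free_unit; apply/inj_row_free => v vG0.
  by apply: fx_inj; rewrite [LHS]fxG vG0 outer0r.
right; have [|W fxW] := @linear_outer_l _ _ _ _ (trmx \o f \o mulmx x^T) b b0.
  by move=> y; have [w fy] := right_factor y; exists w; rewrite /= [f _]fy tr_outer.
have {}fxW y : f (outer x y) = outer (y *m W) b.
  by apply: (can_inj trmxK); rewrite tr_outer -fxW.
exists b, W; split => //; apply/inj_row_free => v vW0.
by apply: fx_inj; rewrite fxW vW0 outer0l.
Qed.

Lemma col_type_le (x : 'rV[F]_m) : col_type x -> (n <= m)%N.
Proof. by case=> b [W [_ W_free _]]; rewrite -(eqP W_free) rank_leq_col. Qed.

Lemma row_col_cover x1 x2 a1 G1 b2 W2 :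
  G1 \in unitmx -> a1 != 0 -> b2 != 0 ->
  (forall y, f (outer x1 y) = outer a1 (y *m G1)) ->
  (forall y, f (outer x2 y) = outer (y *m W2) b2) ->
  forall y : 'rV[F]_n, (y *m W2 <= a1)%MS || (y <= b2 *m invmx G1)%MS.
Proof.
move=> G1_unit a10 b20 f_x1 f_x2 y; have [->|y0] := eqVneq y 0.
  by rewrite sub0mx orbT.
have yG1 : y *m G1 != 0 by rewrite mulmx_free_eq0 ?row_free_unit.
have := mxrank_outer (x1 + x2) y; rewrite -f_rank outerDl linearD f_x1 f_x2.
case/outerD_rank_le1/(_ a10 yG1)/orP => [-> // | /(sub_rV_sym b20) yG1_b2].
by rewrite -[y](mulmxK G1_unit) submxMr ?orbT.
Qed.

Lemma row_col_type_excl x1 x2 : (1 < n)%N -> row_type x1 -> col_type x2 -> False.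
Proof.
move=> n_gt1 [a1 [G1 [a10 G1_unit f_x1]]] [b2 [W2 [b20 W2_free f_x2]]].
apply: (row_free_two_lines_cover W2_free _ n_gt1 (row_col_cover _ _ _ f_x1 f_x2)) => //.
by rewrite mulmx_free_eq0 ?row_free_unit ?unitmx_inv.
Qed.

End RankPreserver.

Section TwoSided.
Variable F : fieldType.

Definition two_sided_mul m n (f : 'M[F]_(m, n) -> 'M[F]_(m, n)) :=
  exists A B, [/\ A \in unitmx, B \in unitmx & forall X, f X = A *m X *m B].

Lemma linear_of_outer_delta m n (f : {linear 'M[F]_(m, n) -> 'M[F]_(m, n)})
    (M : 'M[F]_m) (G : 'M[F]_n) :
  (forall i y, f (outer (delta_mx 0 i) y) = outer (row i M) (y *m G)) ->
  forall X, f X = M^T *m X *m G.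
Proof.
move=> f_outer X; rewrite {1}[X]matrix_sum_delta linear_sum [in RHS](matrix_sum_delta X).
rewrite mulmx_sumr mulmx_suml; apply: eq_bigr => i _.
rewrite linear_sum mulmx_sumr mulmx_suml; apply: eq_bigr => j _.
rewrite linearZ -scalemxAr -scalemxAl -outer_delta f_outer.
by rewrite /outer rowE trmx_mul !mulmxA.
Qed.

Lemma two_sided_mul_flat m n (f : 'M[F]_(m, n) -> 'M[F]_(m, n)) :
  (m == 0)%N || (n == 0)%N -> two_sided_mul f.
Proof.
move=> mn0; exists 1%:M, 1%:M; split; rewrite ?unitmx1 // => X.
move: (f X) (1%:M *m X *m 1%:M); case/orP: mn0 => /eqP -> A B.
  by rewrite (flatmx0 A) (flatmx0 B).
by rewrite (thinmx0 A) (thinmx0 B).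
Qed.

Lemma two_sided_mul_trconj m n (f : 'M[F]_(m, n) -> 'M[F]_(m, n)) :
  two_sided_mul (trmx \o f \o trmx) -> two_sided_mul f.
Proof.
case=> A [B [A_unit B_unit fT]]; exists B^T, A^T; split; rewrite ?unitmx_tr // => X.
have /(congr1 trmx) := fT X^T; rewrite /= !trmxK => ->.
by rewrite !trmx_mul trmxK mulmxA.
Qed.

Lemma row_type_tr_of_col_type n (f : {linear 'M[F]_n -> 'M[F]_n}) x :
  col_type f x -> row_type (trmx \o f) x.
Proof.
case=> b [W [b0 W_free f_x]]; exists b, W; split; rewrite -?row_free_unit //.
by move=> y; rewrite /= f_x tr_outer.
Qed.

End TwoSided.

Section RowTypePreserver.
Variable F : fieldType.
Variables m n : nat.
Variable f : {linear 'M[F]_(m.+1, n.+1) -> 'M[F]_(m.+1, n.+1)}.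
Hypothesis f_rank : forall X, \rank (f X) = \rank X.

Lemma row_type_common_mul x0 x a0 G0 : a0 != 0 -> G0 \in unitmx ->
  (forall y, f (outer x0 y) = outer a0 (y *m G0)) -> ~~ (x <= x0)%MS ->
  row_type f x -> exists a, forall y, f (outer x y) = outer a (y *m G0).
Proof.
move=> a00 G0_unit f_x0 x_nx0 [a [G [a_neq0 G_unit f_x]]].
have a_na0 : ~~ (a <= a0)%MS.
  apply: contra x_nx0 => /sub_rVP [k def_a]; pose y : 'rV[F]_n.+1 := delta_mx 0 0.
  have : outer x0 (k *: (y *m G) *m invmx G0) = outer x y.
    by apply: (rank_pres_inj f_rank); rewrite f_x0 f_x mulmxKV // def_a outerZlr.
  by move/outer_eq_sub; apply; apply: delta_rV_neq0.
have G_sub (y : 'rV[F]_n.+1) : (y *m G <= y *m G0)%MS.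
  have [->|y0] := eqVneq y 0; first by rewrite !mul0mx sub0mx.
  have yG0 : y *m G0 != 0 by rewrite mulmx_free_eq0 ?row_free_unit.
  have := mxrank_outer (x0 + x) y; rewrite -f_rank outerDl linearD f_x0 f_x.
  by case/outerD_rank_le1/(_ a00 yG0)/orP => // a_a0; rewrite a_a0 in a_na0.
have [c def_G] := rowsub_mul_scale G0_unit G_sub.
by exists (c *: a) => y; rewrite f_x def_G -scalemxAr outerZlr.
Qed.

Lemma two_sided_of_row_type :
  (forall i : 'I_m.+1, row_type f (delta_mx 0 i)) -> two_sided_mul f.
Proof.
move=> row_f; have [a0 [G0 [a00 G0_unit f_e0]]] := row_f 0.
have common i : exists a, forall y, f (outer (delta_mx 0 i) y) = outer a (y *m G0).
  have [->|i0] := eqVneq i 0; first by exists a0.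
  apply: row_type_common_mul a00 G0_unit f_e0 _ (row_f i).
  apply/negP => /sub_rVP [k /rowP/(_ i)].
  by rewrite !mxE !eqxx (negPf i0) /= mulr0 => /eqP; rewrite oner_eq0.
have [a f_e] := fin_all_exists common; pose M := \matrix_i a i.
have f_std : forall X, f X = M^T *m X *m G0.
  by apply: linear_of_outer_delta => i y; rewrite rowK f_e.
exists M^T, G0; split => //.
rewrite unitmx_tr -row_free_unit; apply/inj_row_free => v vM.
have := f_std (outer v (delta_mx 0 0)); rewrite /outer mulmxA -trmx_mul vM trmx0 !mul0mx.
by move/(rank_pres_eq0 f_rank)/outer_eq0l; apply; apply: delta_rV_neq0.
Qed.

End RowTypePreserver.

Section RankPreserverClassification.
Variable F : fieldType.

Lemma rank_pres_two_sided_rect m n (f : {linear 'M[F]_(m, n) -> 'M[F]_(m, n)}) :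
  (forall X, \rank (f X) = \rank X) -> m != n -> two_sided_mul f.
Proof.
case: m n f => [|m] [|n] f f_rank; try by move=> _; apply: two_sided_mul_flat.
case: ltngtP => [m_lt_n|m_gt_n|//] _.
  apply: (two_sided_of_row_type f_rank) => i.
  have [//|/col_type_le] := row_or_col_type f_rank (delta_rV_neq0 i) (ltn0Sn n).
  by rewrite leqNgt m_lt_n.
have fT_rank X : \rank ((trmx \o f \o trmx) X) = \rank X.
  by rewrite /= mxrank_tr f_rank mxrank_tr.
apply/two_sided_mul_trconj/(two_sided_of_row_type fT_rank) => i.
have [//|/col_type_le] := row_or_col_type fT_rank (delta_rV_neq0 i) (ltn0Sn m).
by rewrite leqNgt m_gt_n.
Qed.

Lemma rank_pres_two_sided_sq n (f : {linear 'M[F]_n -> 'M[F]_n}) :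
  (forall X, \rank (f X) = \rank X) ->
  two_sided_mul f \/ two_sided_mul (trmx \o f).
Proof.
case: n f => [|n] f f_rank; first by left; apply: two_sided_mul_flat.
have n_gt1 (i : 'I_n.+1) : i != 0 -> (1 < n.+1)%N.
  by move=> i0; apply: leq_ltn_trans (ltn_ord i); rewrite lt0n.
have types i := row_or_col_type f_rank (delta_rV_neq0 i) (ltn0Sn n).
have [row_e0|col_e0] := types 0.
  left; apply: (two_sided_of_row_type f_rank) => i.
  have [->//|i0] := eqVneq i 0; have [//|col_ei] := types i.
  by case: (row_col_type_excl f_rank (n_gt1 _ i0) row_e0 col_ei).
right; have fT_rank X : \rank ((trmx \o f) X) = \rank X by rewrite /= mxrank_tr f_rank.
apply: (two_sided_of_row_type fT_rank) => i; apply: row_type_tr_of_col_type.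
have [->//|i0] := eqVneq i 0; have [row_ei|//] := types i.
by case: (row_col_type_excl f_rank (n_gt1 _ i0) row_ei col_e0).
Qed.

End RankPreserverClassification.

(** * Vectorization and SLOCC equivalence *)

Section Vectorization.
Variable F : fieldType.
Variables I1 I2 : nat.

Fact vecc_is_linear : linear (@vecc F I1 I2).
Proof. by move=> k u v; rewrite /vecc !(linearD, linearZ). Qed.
HB.instance Definition _ := GRing.isLinear.Build F _ _ _ (@vecc F I1 I2) vecc_is_linear.

Fact foldc_is_linear : linear (@foldc F I1 I2).
Proof. by move=> k u v; rewrite /foldc !(linearD, linearZ). Qed.
HB.instance Definition _ := GRing.isLinear.Build F _ _ _ (@foldc F I1 I2) foldc_is_linear.

Lemma veccK : cancel (@vecc F I1 I2) (@foldc F I1 I2).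
Proof. by move=> X; rewrite /foldc /vecc trmxK mxvecK trmxK. Qed.

Lemma foldcK : cancel (@foldc F I1 I2) (@vecc F I1 I2).
Proof. by move=> a; rewrite /foldc /vecc trmxK vec_mxK trmxK. Qed.

Lemma mxrank_mul_unit (A1 : 'M[F]_I1) (A2 : 'M[F]_I2) X :
  A1 \in unitmx -> A2 \in unitmx -> \rank (A1 *m X *m A2) = \rank X.
Proof.
move=> A1_unit A2_unit; rewrite mxrankMfree ?row_free_unit //.
by rewrite -mxrank_tr trmx_mul mxrankMfree ?row_free_unit ?unitmx_tr // mxrank_tr.
Qed.

(* Since [vecc X = (mxvec X^T)^T], K is the transposed matrix of
   [Z |-> A2^T Z A1^T] acting on [X^T]. *)
Lemma vecc_mul_unit (A1 : 'M[F]_I1) (A2 : 'M[F]_I2) :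
  A1 \in unitmx -> A2 \in unitmx ->
  exists2 K : 'M[F]_(I2 * I1), K \in unitmx &
    forall X, K *m vecc X = vecc (A1 *m X *m A2).
Proof.
move=> A1_unit A2_unit; exists (lin_mx (mulmx A2^T \o mulmxr A1^T))^T => [|X].
  rewrite unitmx_tr -row_free_unit; apply/inj_row_free => v.
  rewrite mul_rV_lin /= => /eqP; rewrite mxvec_eq0 => /eqP A2vA1.
  have /(congr1 (mulmx (invmx A2^T))) := A2vA1.
  rewrite mulKmx ?unitmx_tr // mulmx0 => /(congr1 (mulmxr (invmx A1^T))).
  by rewrite /= mulmxK ?unitmx_tr // mul0mx -{2}[v]vec_mxK => ->; rewrite linear0.
by rewrite /vecc -trmx_mul mul_vec_lin /= !trmx_mul mulmxA.
Qed.

End Vectorization.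

Section Casts.
Variable F : fieldType.

Lemma castmx_mul_inner m n p q (e : n = p) (A : 'M[F]_(m, n)) (B : 'M[F]_(n, q)) :
  castmx (erefl m, e) A *m castmx (e, erefl q) B = A *m B.
Proof. by case: p / e. Qed.

Lemma castmx_mul n p q (e : n = p) (A : 'M[F]_n) (B : 'M[F]_(n, q)) :
  castmx (e, e) A *m castmx (e, erefl q) B = castmx (e, erefl q) (A *m B).
Proof. by case: p / e. Qed.

Lemma unitmx_castmx n p (e : n = p) (A : 'M[F]_n) :
  (castmx (e, e) A \in unitmx) = (A \in unitmx).
Proof. by case: p / e. Qed.

Lemma castmx_esym_mul n p q (e : n = p) (A : 'M[F]_p) (B : 'M[F]_(n, q)) :
  castmx (esym e, esym e) A *m B = castmx (esym e, erefl q) (A *m castmx (e, erefl q) B).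
Proof. by move: A; case: p / e. Qed.

Lemma unitmx_ublock r s (Q : 'M[F]_(r + s)) : Q \in unitmx -> dlsubmx Q = 0 ->
  ulsubmx Q \in unitmx /\ drsubmx Q \in unitmx.
Proof.
move=> Q_unit dl0; move: Q_unit; rewrite -[Q in Q \in _]submxK dl0 unitmxE det_ublock.
by rewrite unitrM -!unitmxE => /andP.
Qed.

End Casts.

Section StateCoordinates.
Variable F : fieldType.
Variables r s I1 I2 : nat.
Hypothesis e : (r + s = I2 * I1)%N.
Implicit Types (G : 'I_r -> 'M[F]_(I1, I2)) (Gc : 'I_s -> 'M[F]_(I1, I2)).

Definition vecc_mx G : 'M[F]_(I2 * I1, r) := \matrix_(i, k) vecc (G k) i 0.

Lemma Umx_mul_col0 G Gc q (W : 'M[F]_(r, q)) :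
  Umx e G Gc *m castmx (e, erefl q) (col_mx W 0) = vecc_mx G *m W.
Proof. by rewrite /Umx castmx_mul_inner mul_row_col mulmx0 addr0. Qed.

Lemma vecc_mx_mul G (w : 'cV[F]_r) : vecc_mx G *m w = vecc (\sum_l w l 0 *: G l).
Proof.
apply/colP => i; rewrite linear_sum summxE mxE; apply: eq_bigr => l _.
by rewrite linearZ !mxE mulrC.
Qed.

Lemma vecc_mx_delta G k : vecc_mx G *m delta_mx k 0 = vecc (G k).
Proof. by rewrite -colE; apply/colP => i; rewrite !mxE. Qed.

Lemma Ptilde_mul_col0 P Y Pbar q (W : 'M[F]_(r, q)) :
  Ptilde e P Y Pbar *m castmx (e, erefl q) (col_mx W 0) =
  castmx (e, erefl q) (col_mx (P *m W) 0).
Proof. by rewrite /Ptilde castmx_mul mul_block_col !mulmx0 mul0mx addr0 add0r. Qed.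

(* [invmx U' *m vecc (G' k)] is the k-th basis vector, on which Ptilde acts
   through its upper left block P. *)
Lemma cond_star_map_state G Gc G' Gc' P Y Pbar k :
  complementary e G' Gc' ->
  foldc (Umx e G Gc *m Ptilde e P Y Pbar *m invmx (Umx e G' Gc') *m vecc (G' k))
  = \sum_l P l k *: G l.
Proof.
move=> U'_unit; have U'_G'k :
    invmx (Umx e G' Gc') *m vecc (G' k) = castmx (e, erefl 1%N) (col_mx (delta_mx k 0) 0).
  by rewrite -vecc_mx_delta -(Umx_mul_col0 G' Gc') mulKmx.
rewrite -mulmxA U'_G'k -mulmxA Ptilde_mul_col0 Umx_mul_col0 vecc_mx_mul veccK.
by apply: eq_bigr => l _; rewrite -colE mxE.
Qed.

Lemma Ptilde_of_dlsub0 (Q : 'M[F]_(r + s)) :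
  dlsubmx Q = 0 -> castmx (e, e) Q = Ptilde e (ulsubmx Q) (ursubmx Q) (drsubmx Q).
Proof. by move=> dl0; rewrite /Ptilde -dl0 submxK. Qed.

End StateCoordinates.

Section Slocc.
Variable F : fieldType.

Lemma sum_comb_inv r (V : lmodType F) (P : 'M[F]_r) (G H : 'I_r -> V) :
  P \in unitmx -> (forall k, H k = \sum_l P l k *: G l) ->
  forall j, G j = \sum_k invmx P k j *: H k.
Proof.
move=> P_unit def_H j.
under eq_bigr => k _ do rewrite def_H scaler_sumr.
rewrite exchange_big /=.
have PinvP l : \sum_k invmx P k j *: (P l k *: G l) = (P *m invmx P) l j *: G l.
  by rewrite mxE scaler_suml; apply: eq_bigr => k _; rewrite scalerA mulrC.
under eq_bigr => l _ do rewrite PinvP (mulmxV P_unit).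
rewrite (bigD1 j) //= mxE eqxx mulr1n scale1r big1 ?addr0 // => l lj.
by rewrite mxE (negPf lj) mulr0n scale0r.
Qed.

Lemma slocc_of_comb r I1 I2 (G G' : 'I_r -> 'M[F]_(I1, I2)) (P : 'M[F]_r) A B :
  P \in unitmx -> A \in unitmx -> B \in unitmx ->
  (forall k, A *m G' k *m B = \sum_l P l k *: G l) -> slocc G' G.
Proof.
move=> P_unit A_unit B_unit def_G'; exists (invmx P)^T, A, B^T.
split; rewrite ?unitmx_tr ?unitmx_inv // => k; rewrite trmxK.
by rewrite (sum_comb_inv P_unit def_G' k); apply: eq_bigr => l _; rewrite mxE.
Qed.

Section Coordinates.
Variables r s I1 I2 : nat.
Hypothesis e : (r + s = I2 * I1)%N.
Implicit Types (G : 'I_r -> 'M[F]_(I1, I2)) (Gc : 'I_s -> 'M[F]_(I1, I2)).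

Lemma vecc_mx_slocc G G' P0 A1 A2 K :
  P0 \in unitmx -> (forall X, K *m vecc X = vecc (A1 *m X *m A2^T)) ->
  (forall k, G k = \sum_l P0 k l *: (A1 *m G' l *m A2^T)) ->
  K *m vecc_mx G' = vecc_mx G *m invmx P0^T.
Proof.
move=> P0_unit K_vecc def_G; apply: (canRL (mulmxK _)); first by rewrite unitmx_tr.
apply/matrixP => i k; rewrite [RHS]mxE def_G linear_sum summxE [LHS]mxE.
apply: eq_bigr => l _; rewrite linearZ [RHS]mxE [P0^T _ _]mxE mulrC; congr (_ * _).
by rewrite /= -K_vecc -vecc_mx_delta mulmxA -colE [RHS]mxE.
Qed.

(* The block triangular matrix is U^-1 K U', where K represents the local
   operators; it fixes the span of the first r coordinates because K maps
   the state G' into the span of G. *)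
Lemma slocc_cond_star G Gc G' Gc' :
  complementary e G Gc -> complementary e G' Gc' -> slocc G' G ->
  cond_star e G Gc G' Gc'.
Proof.
rewrite /complementary => U_unit U'_unit [P0 [A1 [A2 [P0_unit A1_unit A2_unit def_G]]]].
have {A2_unit}A2T_unit : A2^T \in unitmx by rewrite unitmx_tr.
have [K K_unit K_vecc] := vecc_mul_unit A1_unit A2T_unit.
pose Q := castmx (esym e, esym e) (invmx (Umx e G Gc) *m K *m Umx e G' Gc').
have Q_col : Q *m col_mx 1%:M 0 = col_mx (invmx P0^T) 0.
  rewrite castmx_esym_mul -!mulmxA Umx_mul_col0 mulmx1.
  rewrite (vecc_mx_slocc P0_unit K_vecc def_G) -(Umx_mul_col0 e G Gc) mulKmx //.
  exact: (castmxK e (erefl r)).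
have dl0 : dlsubmx Q = 0.
  have : dsubmx (Q *m col_mx 1%:M 0) = 0 by rewrite Q_col col_mxKd.
  by rewrite -mul_dsub_mx -[dsubmx Q]hsubmxK mul_row_col mulmx1 mulmx0 addr0.
have Q_unit : Q \in unitmx by rewrite unitmx_castmx !unitmx_mul unitmx_inv U_unit K_unit.
have [ul_unit dr_unit] := unitmx_ublock Q_unit dl0.
exists (ulsubmx Q), (drsubmx Q), (ursubmx Q); split => // a.
rewrite -(Ptilde_of_dlsub0 e dl0) castmxKV !mulmxA (mulmxV U_unit) mul1mx.
by rewrite (mulmxK U'_unit) -[a]foldcK K_vecc !veccK mxrank_mul_unit.
Qed.

Lemma cond_star_rank_pres G Gc G' Gc' :
  complementary e G' Gc' -> cond_star e G Gc G' Gc' ->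
  exists2 P : 'M[F]_r, P \in unitmx &
    exists f : {linear 'M[F]_(I1, I2) -> 'M[F]_(I1, I2)},
      (forall X, \rank (f X) = \rank X) /\ forall k, f (G' k) = \sum_l P l k *: G l.
Proof.
move=> U'_unit [P [Pbar [Y [P_unit _ rank_star]]]]; exists P => //.
pose M := Umx e G Gc *m Ptilde e P Y Pbar *m invmx (Umx e G' Gc').
exists (@foldc F I1 I2 \o mulmx M \o @vecc F I1 I2); split => [X|k] /=.
  by rewrite rank_star veccK.
exact: cond_star_map_state.
Qed.

End Coordinates.

End Slocc.

Theorem corollary1 (F : numClosedFieldType) :
  (forall (r s I1 I2 : nat) (e : (r + s = I2 * I1)%N)
     (G G' : 'I_r -> 'M[F]_(I1, I2)) (Gc Gc' : 'I_s -> 'M[F]_(I1, I2)),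
     lin_indep G -> lin_indep G' ->
     complementary e G Gc -> complementary e G' Gc' ->
     (* (a) *) (slocc G' G -> cond_star e G Gc G' Gc') /\
     (* (b) *) (I1 <> I2 -> cond_star e G Gc G' Gc' -> slocc G' G)) /\
  (forall (r s I : nat) (e : (r + s = I * I)%N)
     (G G' : 'I_r -> 'M[F]_(I, I)) (Gc Gc' : 'I_s -> 'M[F]_(I, I)),
     lin_indep G -> lin_indep G' ->
     complementary e G Gc -> complementary e G' Gc' ->
     (* (c) *) cond_star e G Gc G' Gc' -> slocc G' G \/ slocc G' (stateT G)).
Proof.
split=> [r s I1 I2 e G G' Gc Gc' _ _ U_unit U'_unit | r s I e G G' Gc Gc' _ _ _ U'_unit star].
  split=> [|I12 star]; first exact: slocc_cond_star.
  have [P P_unit [f [f_rank f_G']]] := cond_star_rank_pres U'_unit star.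
  have [A [B [A_unit B_unit def_f]]] := rank_pres_two_sided_rect f_rank (introN eqP I12).
  by apply: (slocc_of_comb P_unit A_unit B_unit) => k; rewrite -def_f f_G'.
have [P P_unit [f [f_rank f_G']]] := cond_star_rank_pres U'_unit star.
have [[A [B [A_unit B_unit def_f]]]|[A [B [A_unit B_unit def_fT]]]] :=
  rank_pres_two_sided_sq f_rank; [left|right].
  by apply: (slocc_of_comb P_unit A_unit B_unit) => k; rewrite -def_f f_G'.
apply: (slocc_of_comb P_unit A_unit B_unit) => k.
by rewrite -def_fT /= f_G' linear_sum; apply: eq_bigr => l _; rewrite linearZ.
Qed.
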